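(* Let $S$ be a set and let $f:2^S\to 2^S$ be monotonic with respect to $\subseteq$. Then $\nu f=\bigcup\{X\in 2^S\mid X \text{ is supported for } f\}$.
   Context: $\nu f$ denotes the greatest fixpoint of $f$ in the complete lattice $(2^S,\subseteq)$. For a binary relation ${\prec}$ on $X$ and $x\in X$, $\prec^{-1}(x)=\{x'\in X\mid x'\prec x\}$. A pair $(X,\prec)$ is a support ordering for $f$ if $X\subseteq S$, ${\prec}\subseteq X\times X$, and $x\in f(\prec^{-1}(x))$ for every $x\in X$. A set $X\subseteq S$ is supported for $f$ if there is some ${\prec}\subseteq X\times X$ such that $(X,\prec)$ is a support ordering for $f$. *)

Definition subset {S : Type} (A B : S -> Prop) : Prop := forall x, A x -> B x.
Definition set_eq {S : Type} (A B : S -> Prop) : Prop := forall x, A x <-> B x.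

Definition monotonic {S : Type} (f : (S -> Prop) -> (S -> Prop)) : Prop :=
  forall A B, subset A B -> subset (f A) (f B).

Definition is_gfp {S : Type} (f : (S -> Prop) -> (S -> Prop)) (X : S -> Prop) : Prop :=
  set_eq (f X) X /\ (forall Y, set_eq (f Y) Y -> subset Y X).

Definition pred_set {S : Type} (X : S -> Prop) (prec : S -> S -> Prop) (x : S) : S -> Prop :=
  fun x' => X x' /\ prec x' x.

Definition support_ordering {S : Type} (f : (S -> Prop) -> (S -> Prop))
    (X : S -> Prop) (prec : S -> S -> Prop) : Prop :=
  (forall x y, prec x y -> X x /\ X y) /\
  (forall x, X x -> f (pred_set X prec x) x).

Definition supported {S : Type} (f : (S -> Prop) -> (S -> Prop)) (X : S -> Prop) : Prop :=
  exists prec : S -> S -> Prop, support_ordering f X prec.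

Definition union_supported {S : Type} (f : (S -> Prop) -> (S -> Prop)) : S -> Prop :=
  fun x => exists X, supported f X /\ X x.

(** A set is supported for a monotone [f] exactly when it is a post-fixpoint
    [X ⊆ f X]: a support ordering shrinks the argument of [f] below [X], and
    conversely the full relation on a post-fixpoint [X] has [≺^{-1}(x) = X].
    By Knaster–Tarski the greatest fixpoint is the union of all post-fixpoints. *)

Section Postfixpoints.

Variable S : Type.
Variable f : (S -> Prop) -> (S -> Prop).
Hypothesis f_mono : monotonic f.

Definition postfixed (X : S -> Prop) : Prop := subset X (f X).

Lemma supported_postfixed (X : S -> Prop) : supported f X -> postfixed X.
Proof.
  intros [prec [_ Hsupp]] x Hx.
  apply (f_mono (pred_set X prec x)); [intros y [Hy _]; exact Hy | exact (Hsupp x Hx)].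
Qed.

Lemma postfixed_supported (X : S -> Prop) : postfixed X -> supported f X.
Proof.
  intros HX. exists (fun a b => X a /\ X b). split.
  - intros a b Hab; exact Hab.
  - intros x Hx. apply (f_mono X); [intros y Hy; split; auto | exact (HX x Hx)].
Qed.

Definition union_postfixed : S -> Prop :=
  fun x => exists X, postfixed X /\ X x.

Lemma union_postfixed_postfixed : postfixed union_postfixed.
Proof.
  intros x [X [HX Hx]].
  apply (f_mono X); [intros y Hy; exists X; auto | exact (HX x Hx)].
Qed.

Lemma union_postfixed_fixed : set_eq (f union_postfixed) union_postfixed.
Proof.
  intros x; split; [| apply union_postfixed_postfixed].
  intros Hx. exists (f union_postfixed). split; [| exact Hx].
  apply f_mono, union_postfixed_postfixed.
Qed.

Lemma gfp_ge_postfixed (nu X : S -> Prop) :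
  is_gfp f nu -> postfixed X -> subset X nu.
Proof.
  intros [_ Hgreatest] HX x Hx.
  apply (Hgreatest _ union_postfixed_fixed). exists X; auto.
Qed.

End Postfixpoints.

Theorem corollary2 (S : Type) (f : (S -> Prop) -> (S -> Prop)) :
  monotonic f ->
  forall nu : S -> Prop, is_gfp f nu -> set_eq nu (union_supported f).
Proof.
  intros Hmono nu Hnu x. split.
  - intros Hx. exists nu. split; [| exact Hx].
    apply (postfixed_supported _ _ Hmono).
    intros y Hy. apply (proj1 Hnu); exact Hy.
  - intros [X [HX Hx]].
    exact (gfp_ge_postfixed _ _ Hmono nu X Hnu (supported_postfixed _ _ Hmono X HX) x Hx).
Qed.
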